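(* Consider the PDP-TSLU feasible set described in the context. For each pair of pickup tasks with $i\in P^{4},\ j\in P^{1}$, or $i\in P^{3},\ j\in P^{2}$, every feasible solution of the PDP-TSLU satisfies \[ x_{ij}+x_{ji}+x_{i,i+n}+x_{i+n,j+n}\le 1, \] where any variable $x_{uv}$ whose arc $(u,v)$ is not in the arc set $A$ is taken to be $0$.
   Context: Data. Let $n\ge1$, $P=\{1,\dots,n\}$ (pickup tasks), $D=\{n+1,\dots,2n\}$ (delivery tasks; task $i+n$ is the delivery paired with pickup $i$), $V'=P\cup D$, $V=\{0\}\cup V'\cup\{2n+1\}$ ($0$ and $2n+1$ are virtual start and end tasks). Each $i\in V'$ has a side indicator $a_i\in\{0,1\}$. Define $P^{1}=\{i\in P:a_i=a_{i+n}=0\}$, $P^{2}=\{i\in P:a_i=a_{i+n}=1\}$, $P^{3}=\{i\in P:a_i=0,a_{i+n}=1\}$, $P^{4}=\{i\in P:a_i=1,a_{i+n}=0\}$. The pickup tasks are partitioned into FIFO queues (one per station); for pickups $k,j$ in the same queue, $k\lhd j$ (equivalently $j\rhd k$) means $k$ is queued ahead of $j$, and $i\oplus1$ denotes the pickup queued immediately behind $i$ in its queue (if any). Given are an integer capacity $Q\ge1$, loads $q_i>0$ and $q_{i+n}=-q_i$ for $i\in P$, durations $s_i\ge0$ for $i\in V\setminus\{2n+1\}$ with $s_0=0$, windows $[e_i,l_i]$ for $i\in P$, and travel times $t_{ij}\ge0$. Arc set. For $i\in P$ let $S^{i}_{P,1}=\{j\in P:j\lhd i\}$, $S^{i}_{P,2}=\{j\in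 P:j\rhd i\oplus1\}$, $S^{i}_{P,3}=P^{3}$ if $i\in P^{1}\cup P^{4}$ (else $\emptyset$), $S^{i}_{P,4}=P^{4}$ if $i\in P^{2}\cup P^{3}$ (else $\emptyset$), $S^{i}_{D,1}=\{j\in D:j-n\rhd i\}$, $S^{i}_{D,2}=\{j\in D:j-n\in P^{1}\cup P^{4}\setminus\{i\}\}$ if $i\in P^{1}\cup P^{3}$ (else $\emptyset$), $S^{i}_{D,3}=\{j\in D:j-n\in P^{2}\cup P^{3}\setminus\{i\}\}$ if $i\in P^{2}\cup P^{4}$ (else $\emptyset$). For $i\in D$ let $S^{i}_{P,5}=\{j\in P:j\lhd i-n\}$; $S^{i}_{P,6}=\{j\in P:\exists k\in P^{3},\ i-n\lhd k\lhd j\}$ if $i-n\in P^{1}$ (else $\emptyset$); $S^{i}_{P,7}=\{j\in P:\exists k\in P^{4},\ i-n\lhd k\lhd j\}$ if $i-n\in P^{2}$ (else $\emptyset$); $S^{i}_{P,8}=\{j\in P:|\{k\in P^{3}:i-n\lhd k\lhd j\}|\ge Q\}$ if $i-n\in P^{3}$ (else $\emptyset$); $S^{i}_{P,9}=\{j\in P:|\{k\in P^{4}:i-n\lhd k\lhd j\}|\ge Q\}$ if $i-n\in P^{4}$ (else $\emptyset$); $S^{i}_{D,4}=\{j\in D:j-n\rhd i-n\}$ if $i-n\in P^{1}\cup P^{2}$ (else $\emptyset$); $S^{i}_{D,5}=\{j\in D:j-n\lhd i-n\}$ if $i-n\in P^{3}\cup P^{4}$ (else $\emptyset$); $S^{i}_{D,6}=\{j\in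 D:j-n\in S^{i}_{P,8}\cup S^{i}_{P,9}\}$; $S^{i}_{D,7}=\{j\in D:j-n\in P^{2}\cup P^{4}\}$ if $i-n\in P^{3}$ (else $\emptyset$); $S^{i}_{D,8}=\{j\in D:j-n\in P^{1}\cup P^{3}\}$ if $i-n\in P^{4}$ (else $\emptyset$). The arc set is $A=\{(0,j):j\in P,\ \nexists k\lhd j\}\cup\{(i,2n+1):i\in D,\ \nexists k\rhd i-n\}\cup\{(i,j):i\in P,\ j\in V'\setminus(\cup_{l=1}^{4}S^{i}_{P,l}\cup\cup_{l=1}^{3}S^{i}_{D,l})\}\cup\{(i,j):i\in D,\ j\in V'\setminus(\cup_{l=5}^{9}S^{i}_{P,l}\cup\cup_{l=4}^{8}S^{i}_{D,l})\}$, minus all $(i,j)$ with $i,j\in V'$ and $i=j$ or $i=j+n$. Let $A'=\{(i,j)\in A:i,j\in V'\}$. Feasible solutions of the PDP-TSLU. Variables: $x_{ij}\in\{0,1\}$ for $(i,j)\in A$; $y^{k}_{ij}\in\{0,1\}$ for $(i,j)\in A'$, $k\in P$; reals $b_i\ge0$ ($b_0=0$) and $w_i\ge0$ ($w_0=0$). Constraints: (i) $\sum_{j:(i,j)\in A}x_{ij}=1$ for $i\in V\setminus\{2n+1\}$ and $\sum_{j:(j,i)\in A}x_{ji}=1$ for $i\in V\setminus\{0\}$; (ii) $b_{i+n}\ge b_i+s_i+t_{i,i+n}$ for $i\in P$; (iii) $b_{i\oplus1}\ge b_i+s_i$ whenever $i\oplus1$ exists; (iv) for $(i,j)\in A$ with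 $j\in V'\cup\{2n+1\}$, $x_{ij}=1\Rightarrow b_j\ge b_i+s_i+t_{ij}$, and for $(i,j)\in A$ with $j\in V'$, $x_{ij}=1\Rightarrow w_j\ge w_i+q_j$; (v) $e_i\le b_{i+n}+s_{i+n}\le l_i$ for $i\in P$; (vi) $\max\{0,q_i\}\le w_i\le\min\{Q,Q+q_i\}$ for $i\in V'$; (vii) for all $i\in V'$, $k\in P$: $\sum_{j:(i,j)\in A'}y^k_{ij}-\sum_{j:(j,i)\in A'}y^k_{ji}$ equals $1$ if $i=k$, $-1$ if $i=k+n$, $0$ otherwise; (viii) writing $Y^k(v)=\sum_{u:(u,v)\in A'}y^k_{uv}$: $Y^k(j)=Y^k(j+n)$ for $j\in P^{1}\setminus\{k\},k\in P^{1}$ and for $j\in P^{2}\setminus\{k\},k\in P^{2}$; $Y^k(j)+Y^k(j+n)\le1$ for $j\in P^{3}\setminus\{k\},k\in P^{3}$ and for $j\in P^{4}\setminus\{k\},k\in P^{4}$; $y^k_{uj}=0$ for all $(u,j)\in A'$ when ($j\in P^{3},k\in P^{1}$) or ($j\in P^{4},k\in P^{2}$) or ($j\in P^{4},k\in P^{3}$) or ($j\in P^{3},k\in P^{4}$); $y^k_{u,j+n}=0$ for all $(u,j+n)\in A'$ when ($j\in P^{4},k\in P^{1}$) or ($j\in P^{3},k\in P^{2}$); (ix) $y^k_{ij}\le x_{ij}$ for $(i,j)\in A'$, $k\in P$. *)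

From HB Require Import structures.
From mathcomp Require Import all_boot all_order all_algebra.
Set Implicit Arguments. Unset Strict Implicit. Unset Printing Implicit Defensive.
Import Order.TTheory GRing.Theory Num.Theory.

(* Tasks are natural numbers: 0 = virtual start, 1..n = pickups P,
   n+1..2n = deliveries D (i+n is the delivery of pickup i), 2n+1 = virtual end.
   FIFO queues: [queues : seq (seq nat)], each inner list is one station's
   queue listed from front to back; it is required to partition P. *)

Section Model.
Variables (n : nat) (a : nat -> bool) (queues : seq (seq nat)) (Q : nat).

Definition isP i := (1 <= i <= n)%N.
Definition isD i := (n < i <= n + n)%N.
Definition isV' i := (1 <= i <= n + n)%N.

Definition P1 i := isP i && ~~ a i && ~~ a (i + n).
Definition P2 i := isP i && a i && a (i + n).
Definition P3 i := isP i && ~~ a i && a (i + n).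
Definition P4 i := isP i && a i && ~~ a (i + n).

Definition prec (k j : nat) : bool :=
  has (fun qu => [&& k \in qu, j \in qu & (index k qu < index j qu)%N]) queues.

Definition next_of (i : nat) : option nat :=
  let qs := [seq qu <- queues | i \in qu] in
  match qs with
  | qu :: _ => if ((index i qu).+1 < size qu)%N
               then Some (nth 0%N qu (index i qu).+1) else None
  | [::] => None
  end.

Definition SP1 i j := isP j && prec j i.
Definition SP2 i j := isP j && (if next_of i is Some m then prec m j else false).
Definition SP3 i j := (P1 i || P4 i) && P3 j.
Definition SP4 i j := (P2 i || P3 i) && P4 j.
Definition SD1 i j := isD j && prec i (j - n).
Definition SD2 i j := (P1 i || P3 i) && isD j && (P1 (j - n) || P4 (j - n)) && (j - n != i).
Definition SD3 i j := (P2 i || P4 i) && isD j && (P2 (j - n) || P3 (j - n)) && (j - n != i).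

Definition SP5 i j := isP j && prec j (i - n).
Definition SP6 i j := P1 (i - n) && isP j &&
  has (fun k => [&& P3 k, prec (i - n) k & prec k j]) (iota 1 n).
Definition SP7 i j := P2 (i - n) && isP j &&
  has (fun k => [&& P4 k, prec (i - n) k & prec k j]) (iota 1 n).
Definition SP8 i j := P3 (i - n) && isP j &&
  (Q <= count (fun k => [&& P3 k, prec (i - n) k & prec k j]) (iota 1 n))%N.
Definition SP9 i j := P4 (i - n) && isP j &&
  (Q <= count (fun k => [&& P4 k, prec (i - n) k & prec k j]) (iota 1 n))%N.
Definition SD4 i j := (P1 (i - n) || P2 (i - n)) && isD j && prec (i - n) (j - n).
Definition SD5 i j := (P3 (i - n) || P4 (i - n)) && isD j && prec (j - n) (i - n).
Definition SD6 i j := isD j && (SP8 i (j - n) || SP9 i (j - n)).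
Definition SD7 i j := P3 (i - n) && isD j && (P2 (j - n) || P4 (j - n)).
Definition SD8 i j := P4 (i - n) && isD j && (P1 (j - n) || P3 (j - n)).

Definition arc (i j : nat) : bool :=
  [|| [&& i == 0%N, isP j & ~~ has (fun k => prec k j) (iota 1 n)],
      [&& j == (n + n).+1, isD i & ~~ has (fun k => prec (i - n) k) (iota 1 n)],
      [&& isP i, isV' j, j != i, i != j + n &
          ~~ [|| SP1 i j, SP2 i j, SP3 i j, SP4 i j, SD1 i j, SD2 i j | SD3 i j]]
    | [&& isD i, isV' j, j != i, i != j + n &
          ~~ [|| SP5 i j, SP6 i j, SP7 i j, SP8 i j, SP9 i j,
                 SD4 i j, SD5 i j, SD6 i j, SD7 i j | SD8 i j]]].

Definition arc' (i j : nat) : bool := [&& arc i j, isV' i & isV' j].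

End Model.

Definition xA n a queues Q (x : nat -> nat -> bool) (i j : nat) : nat :=
  arc n a queues Q i j && x i j.

Definition Yin n a queues Q (y : nat -> nat -> nat -> bool) (k v : nat) : nat :=
  (\sum_(u < (n + n).+2 | arc' n a queues Q u v) y k u v)%N.

Local Open Scope ring_scope.

Definition feasible (R : realFieldType) (n : nat) (a : nat -> bool)
  (queues : seq (seq nat)) (Q : nat)
  (q s e l : nat -> R) (t : nat -> nat -> R)
  (x : nat -> nat -> bool) (y : nat -> nat -> nat -> bool)
  (b w : nat -> R) : Prop :=
  let A := arc n a queues Q in
  let A' := arc' n a queues Q in
  let P1 := P1 n a in let P2 := P2 n a in let P3 := P3 n a in let P4 := P4 n a in
  let Y := Yin n a queues Q y in
  b 0%N = 0 /\ w 0%N = 0 /\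
  (forall i, (i <= (n + n).+1)%N -> 0 <= b i) /\
  (forall i, (i <= (n + n).+1)%N -> 0 <= w i) /\
  (forall i, (i <= n + n)%N ->
     (\sum_(j < (n + n).+2 | A i j) (x i j : nat))%N = 1%N) /\
  (forall i, (1 <= i <= (n + n).+1)%N ->
     (\sum_(j < (n + n).+2 | A j i) (x j i : nat))%N = 1%N) /\
  (forall i, isP n i -> b (i + n)%N >= b i + s i + t i (i + n)%N) /\
  (forall i m, isP n i -> next_of queues i = Some m -> b m >= b i + s i) /\
  (forall i j, A i j -> x i j -> (1 <= j <= (n + n).+1)%N ->
     b j >= b i + s i + t i j) /\
  (forall i j, A i j -> x i j -> isV' n j -> w j >= w i + q j) /\
  (forall i, isP n i -> e i <= b (i + n)%N + s (i + n)%N <= l i) /\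
  (forall i, isV' n i ->
     Num.max 0 (q i) <= w i <= Num.min (Q%:R) (Q%:R + q i)) /\
  (forall i k, isV' n i -> isP n k ->
     ((\sum_(j < (n + n).+2 | A' i j) (y k i j : nat))%:Z
      - (\sum_(j < (n + n).+2 | A' j i) (y k j i : nat))%:Z
      = (if i == k then 1 else if i == (k + n)%N then -1 else 0))%R) /\
  (forall k j, P1 k -> P1 j -> j != k -> Y k j = Y k (j + n)%N) /\
  (forall k j, P2 k -> P2 j -> j != k -> Y k j = Y k (j + n)%N) /\
  (forall k j, P3 k -> P3 j -> j != k -> (Y k j + Y k (j + n) <= 1)%N) /\
  (forall k j, P4 k -> P4 j -> j != k -> (Y k j + Y k (j + n) <= 1)%N) /\
  (forall k j u, A' u j ->
     [|| P3 j && P1 k, P4 j && P2 k, P4 j && P3 k | P3 j && P4 k] ->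
     y k u j = false) /\
  (forall k j u, A' u (j + n)%N ->
     (P4 j && P1 k) || (P3 j && P2 k) -> y k u (j + n)%N = false) /\
  (forall i j k, A' i j -> isP n k -> y k i j -> x i j).

(* The arc (i+n, j+n) is excluded from A outright, since [i] and [j] are
   handled on opposite sides.  Using both (i, j) and (j, i) would make the
   load strictly increase around a 2-cycle.  Using (i, j) and (i, i+n) would
   give [i] two successors.  Finally, if (j, i) and (i, i+n) are both used,
   then commodity [j] must leave its origin [j] along the only used arc
   (j, i) and, by flow conservation at [i], leave [i] along the only used arc
   (i, i+n); but (viii) forbids commodity [j] from entering the delivery
   [i+n]. *)

From Pilot Require Import Defs.
From HB Require Import structures.
From mathcomp Require Import all_boot all_order all_algebra.
From mathcomp Require Import zify lra.
Set Implicit Arguments.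
Unset Strict Implicit.
Unset Printing Implicit Defensive.
Import Order.TTheory GRing.Theory Num.Theory.
Local Open Scope ring_scope.

Lemma sum_ord_bool_gt0P (m : nat) (P F : pred nat) :
  reflect (exists2 k, k < m & P k && F k)%N
          (0 < \sum_(k < m | P k) (F k : nat))%N.
Proof.
rewrite lt0n sum_nat_eq0 negb_forall; apply: (iffP existsP) => [[k Hk]|[k km Hk]].
  by exists k => //; move: Hk; case: (P k); case: (F k).
by exists (Ordinal km); move: Hk; case: (P k); case: (F k).
Qed.

Lemma sum_nat_bool_eq1_uniq (I : finType) (P F : pred I) (u v : I) :
  (\sum_(k | P k) (F k : nat))%N = 1%N ->
  P u -> F u -> P v -> F v -> u = v.
Proof.
move=> /eqP /sum_nat_eq1 [k [_ _ Fk0]] Pu Fu Pv Fv.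
have eq_k z : P z -> F z -> z = k.
  by move=> Pz Fz; apply/eqP/negPn/negP => /Fk0 /(_ Pz); rewrite Fz.
by rewrite (eq_k u Pu Fu) (eq_k v Pv Fv).
Qed.

Lemma isP_isV' n i : isP n i -> isV' n i.
Proof. by rewrite /isP /isV'; lia. Qed.

Lemma isP_le n i : isP n i -> (i <= n + n)%N.
Proof. by rewrite /isP; lia. Qed.

Lemma isP_neq_delivery n i j : isP n i -> isP n j -> i != (j + n)%N.
Proof. by rewrite /isP => ? ?; apply/eqP; lia. Qed.

Section ArcSet.
Variables (n : nat) (a : nat -> bool) (queues : seq (seq nat)) (Q : nat).
Local Notation A := (Defs.arc n a queues Q).

Lemma arc_ltn i j : A i j -> (j < (n + n).+2)%N.
Proof.
rewrite /Defs.arc /isP /isV' /isD.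
by case/or4P => /and3P [] // => [_ /andP [_ ?]|/eqP -> //|_ /andP [_ ?]|_ /andP [_ ?]] _; lia.
Qed.

Lemma opposite_sides_isP i j :
  (P4 n a i && P1 n a j) || (P3 n a i && P2 n a j) ->
  [/\ isP n i, isP n j & i != j].
Proof.
rewrite /P1 /P2 /P3 /P4.
case/orP => /andP [/andP [/andP [-> ai] _] /andP [/andP [-> aj] _]];
  by split=> //; apply/eqP => eij; move: ai aj; rewrite eij; case: (a j).
Qed.

Lemma opposite_sides_no_delivery_arc i j :
  (P4 n a i && P1 n a j) || (P3 n a i && P2 n a j) -> A (i + n) (j + n) = false.
Proof.
move=> Hij; have [iP jP _] := opposite_sides_isP Hij.
have [i0 jend iniP iniD jnD] : [/\ i + n != 0, j + n != (n + n).+1,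
    ~~ isP n (i + n), isD n (i + n) & isD n (j + n)]%N.
  by move: iP jP; rewrite /isP /isD => iP jP; split; apply/negP || apply/idP; lia.
rewrite /Defs.arc /SD7 /SD8 (negbTE i0) (negbTE jend) (negbTE iniP) iniD jnD !addnK /=.
by case/orP: Hij => /andP [-> ->]; rewrite /= ?orbT /= !andbF.
Qed.

End ArcSet.

Section FeasibleSolution.
Variables (R : realFieldType) (n : nat) (a : nat -> bool)
  (queues : seq (seq nat)) (Q : nat) (q s e l : nat -> R)
  (t : nat -> nat -> R) (x : nat -> nat -> bool)
  (y : nat -> nat -> nat -> bool) (b w : nat -> R).
Hypothesis feas : feasible n a queues Q q s e l t x y b w.
Local Notation A := (Defs.arc n a queues Q).
Local Notation A' := (arc' n a queues Q).

Lemma feasible_succ_uniq u v v' : (u <= n + n)%N ->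
  A u v -> x u v -> A u v' -> x u v' -> v = v'.
Proof.
move=> un Av xv Av' xv'; have [_ [_ [_ [_ [outdeg _]]]]] := feas.
have := sum_nat_bool_eq1_uniq (outdeg u un)
  (u := Ordinal (arc_ltn Av)) (v := Ordinal (arc_ltn Av')).
by move=> /(_ Av xv Av' xv') /(congr1 val).
Qed.

Lemma feasible_no_2cycle i j : isV' n i -> isV' n j -> 0 < q i + q j ->
  ~~ [&& A i j, x i j, A j i & x j i].
Proof.
move=> iV jV qij; apply/and4P => -[Aij xij Aji xji].
have [_ [_ [_ [_ [_ [_ [_ [_ [_ [load _]]]]]]]]]] := feas.
have := load _ _ Aij xij jV; have := load _ _ Aji xji iV; lra.
Qed.

Lemma feasible_commodity_arc k u v : isP n k -> A' u v -> y k u v -> x u v.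
Proof.
move=> kP A'uv yuv.
have [_ [_ [_ [_ [_ [_ [_ [_ [_ [_ [_ [_ [_ [_ [_ [_ [_ [_ [_ ix]]]]]]]]]]]]]]]]]]] := feas.
exact: ix A'uv kP yuv.
Qed.

Lemma feasible_commodity_leaves_origin k :
  isP n k -> exists v, A' k v && y k k v.
Proof.
move=> kP; have [_ [_ [_ [_ [_ [_ [_ [_ [_ [_ [_ [_ [flow _]]]]]]]]]]]]] := feas.
have := flow k k (isP_isV' kP) kP; rewrite eqxx => Hbal.
have /sum_ord_bool_gt0P [v _ Hv] : (0 < \sum_(v < (n + n).+2 | A' k v) y k k v)%N
  by lia.
by exists v.
Qed.

Lemma feasible_commodity_conserved k u v : isV' n v -> isP n k ->
  v != k -> v != (k + n)%N -> A' u v -> y k u v ->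
  exists u', A' v u' && y k v u'.
Proof.
move=> vV kP vk vkn A'uv yuv.
have [_ [_ [_ [_ [_ [_ [_ [_ [_ [_ [_ [_ [flow _]]]]]]]]]]]]] := feas.
have := flow v k vV kP; rewrite (negbTE vk) (negbTE vkn) => Hbal.
have Hin : (0 < \sum_(u < (n + n).+2 | A' u v) y k u v)%N.
  apply/(sum_ord_bool_gt0P _ (A'^~ v) (y k ^~ v)); exists u; last by rewrite A'uv.
  by move: A'uv => /and3P [_ + _]; rewrite /isV'; lia.
have /sum_ord_bool_gt0P [u' _ Hu'] : (0 < \sum_(u' < (n + n).+2 | A' v u') y k v u')%N
  by lia.
by exists u'.
Qed.

Lemma feasible_no_pickup_then_own_delivery i j : isP n i -> isP n j ->
  ~~ [&& A i j, x i j, A i (i + n)%N & x i (i + n)%N].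
Proof.
move=> iP jP; apply/and4P => -[Aij xij Aii xii].
have /eqP := isP_neq_delivery jP iP; apply.
exact: feasible_succ_uniq (isP_le iP) Aij xij Aii xii.
Qed.

Lemma feasible_no_return_then_delivery i j :
  (P4 n a i && P1 n a j) || (P3 n a i && P2 n a j) ->
  ~~ [&& A j i, x j i, A i (i + n)%N & x i (i + n)%N].
Proof.
move=> Hij; apply/and4P => -[Aji xji Aii xii].
have [iP jP ij] := opposite_sides_isP Hij.
have [v /andP [A'jv yjv]] := feasible_commodity_leaves_origin jP.
have vi : v = i.
  apply: feasible_succ_uniq (isP_le jP) (proj1 (andP A'jv)) _ Aji xji.
  exact: feasible_commodity_arc jP A'jv yjv.
subst v.
have [v /andP [A'iv yiv]] := feasible_commodity_conserved
  (isP_isV' iP) jP ij (isP_neq_delivery iP jP) A'jv yjv.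
have vin : v = (i + n)%N.
  apply: feasible_succ_uniq (isP_le iP) (proj1 (andP A'iv)) _ Aii xii.
  exact: feasible_commodity_arc jP A'iv yiv.
subst v.
have [_ [_ [_ [_ [_ [_ [_ [_ [_ [_ [_ [_ [_ [_ [_ [_ [_ [_ [no_entry _]]]]]]]]]]]]]]]]]]] := feas.
by rewrite no_entry in yiv.
Qed.

End FeasibleSolution.

Theorem proposition2 (R : realFieldType) (n : nat) (a : nat -> bool)
  (queues : seq (seq nat)) (Q : nat)
  (q s e l : nat -> R) (t : nat -> nat -> R)
  (x : nat -> nat -> bool) (y : nat -> nat -> nat -> bool) (b w : nat -> R) :
  (1 <= n)%N -> (1 <= Q)%N ->
  perm_eq (flatten queues) (iota 1 n) ->
  (forall i, isP n i -> 0 < q i) ->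
  (forall i, isP n i -> q (i + n)%N = - q i) ->
  (forall i, (i <= n + n)%N -> 0 <= s i) -> s 0%N = 0 ->
  (forall i j, 0 <= t i j) ->
  @feasible R n a queues Q q s e l t x y b w ->
  forall i j, (P4 n a i && P1 n a j) || (P3 n a i && P2 n a j) ->
    (xA n a queues Q x i j + xA n a queues Q x j i
     + xA n a queues Q x i (i + n) + xA n a queues Q x (i + n) (j + n) <= 1)%N.
Proof.
move=> _ _ _ qpos _ _ _ _ feas i j Hij.
have [iP jP _] := opposite_sides_isP Hij.
have no_ij_ji := feasible_no_2cycle feas (isP_isV' iP) (isP_isV' jP)
  (addr_gt0 (qpos i iP) (qpos j jP)).
have no_ij_iin := feasible_no_pickup_then_own_delivery feas iP jP.
have no_ji_iin := feasible_no_return_then_delivery feas Hij.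
rewrite /xA opposite_sides_no_delivery_arc //= addn0.
move: no_ij_ji no_ij_iin no_ji_iin.
by case: (Defs.arc _ _ _ _ i j); case: (x i j); case: (Defs.arc _ _ _ _ j i); case: (x j i);
   case: (Defs.arc _ _ _ _ i _); case: (x i _).
Qed.
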